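(* Let $a,b\in\mathbb{C}$ and assume $b=[b]$. Then $\langle[a],b\rangle\ge\langle[a+b],b\rangle$.
   Context: Fix an integer $R\ge2$ and $\theta_g=\pi/R$. Polar rounding on $\mathbb{C}$: for $z=Ae^{i\theta}$, $[z]=[A]e^{i[\theta]}$, where $[A]$ is a fixed real rounding function of the modulus and $[\theta]$ is the multiple of $\theta_g$ closest to $\theta$ (minimal error rounding with deterministic tie-breaking). For $u,v\in\mathbb{C}$ (viewed as vectors in $\mathbb{R}^2$), $\langle u,v\rangle\in[0,\pi]$ denotes the smallest angle between $u$ and $v$. *)

From Stdlib Require Import Reals ZArith.
From Coquelicot Require Import Coquelicot.
Open Scope R_scope.

Definition theta_g (Rg : nat) : R := PI / INR Rg.

(* principal argument in (-PI, PI] of a nonzero complex number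
   (value at 0 is an irrelevant convention) *)
Definition carg (z : C) : R :=
  if Rle_dec 0 (Im z) then acos (Re z / Cmod z) else - acos (Re z / Cmod z).

(* [theta]: a minimal-error rounding of angles to multiples of theta_g;
   being a function, it embodies some deterministic tie-breaking rule *)
Definition is_angle_rounding (Rg : nat) (rth : R -> R) : Prop :=
  forall th : R,
    (exists k : Z, rth th = IZR k * theta_g Rg) /\
    (forall k : Z, Rabs (th - rth th) <= Rabs (th - IZR k * theta_g Rg)).

Definition is_modulus_rounding (rA : R -> R) : Prop :=
  forall x : R, 0 <= x -> 0 <= rA x.

(* polar rounding [z] = [A] e^{i [theta]} for z = A e^{i theta} *)
Definition pround (rA rth : R -> R) (z : C) : C :=
  (rA (Cmod z) * cos (rth (carg z)), rA (Cmod z) * sin (rth (carg z))).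

Definition vangle (u v : C) : R :=
  acos ((Re u * Re v + Im u * Im v) / (Cmod u * Cmod v)).

From Stdlib Require Import Reals ZArith Lra Lia.
From Coquelicot Require Import Coquelicot.
Open Scope R_scope.

(* Write b = t e^{i be}, where be is a multiple of theta_g.  Adding b to a turns
   a towards the direction be: cos (arg a - be) strictly increases, unless a is
   already aligned with be (the argument does not change) or opposite to it
   (cos (arg a - be) = -1, its minimum).  Rounding an angle to the nearest
   multiple of theta_g is monotone, and since PI and be are multiples of
   theta_g it commutes with the shifts by 2 PI and the reflection about be that
   fold an angle onto [be, be + PI]; so it preserves the comparison of
   cos (_ - be) weakly, and acos turns that into the comparison of angles. *)

Lemma cos_sub_2PI_mult x m : cos (x - IZR m * (2 * PI)) = cos x.
Proof.
  replace (IZR m * (2 * PI)) with (2 * (IZR m * PI)) by ring.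
  rewrite cos_minus, cos_2a_sin, sin_2a, sin_eq_0_1 by (exists m; reflexivity).
  ring.
Qed.

Lemma angle_reduce w : exists m : Z, - PI <= w - IZR m * (2 * PI) <= PI.
Proof.
  pose proof PI_RGT_0.
  exists (up ((w - PI) / (2 * PI))).
  destruct (archimed ((w - PI) / (2 * PI))) as [Hgt Hle].
  set (m := IZR (up ((w - PI) / (2 * PI)))) in *.
  assert (E : (w - PI) / (2 * PI) * (2 * PI) = w - PI) by (field; lra).
  split; nra.
Qed.

(* [is_angle_rounding Rg rth] unfolds to
   [forall th, nearest_multiple (theta_g Rg) th (rth th)]. *)
Definition nearest_multiple (g w p : R) : Prop :=
  (exists j : Z, p = IZR j * g) /\
  forall k : Z, Rabs (w - p) <= Rabs (w - IZR k * g).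

Section NearestMultiple.

Variable g : R.

Lemma nearest_multiple_shift m w p :
  nearest_multiple g w p -> nearest_multiple g (w - IZR m * g) (p - IZR m * g).
Proof.
  intros [[j ->] Hmin]; split.
  - exists (j - m)%Z; rewrite minus_IZR; ring.
  - intro k. replace (w - IZR m * g - (IZR j * g - IZR m * g)) with (w - IZR j * g) by ring.
    replace (w - IZR m * g - IZR k * g) with (w - IZR (k + m) * g)
      by (rewrite plus_IZR; ring).
    apply Hmin.
Qed.

Lemma nearest_multiple_opp w p :
  nearest_multiple g w p -> nearest_multiple g (- w) (- p).
Proof.
  intros [[j ->] Hmin]; split.
  - exists (- j)%Z; rewrite opp_IZR; ring.
  - intro k. replace (- w - - (IZR j * g)) with (- (w - IZR j * g)) by ring.
    replace (- w - IZR k * g) with (- (w - IZR (- k) * g)) by (rewrite opp_IZR; ring).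
    rewrite !Rabs_Ropp. apply Hmin.
Qed.

Lemma nearest_multiple_of_multiple k p :
  nearest_multiple g (IZR k * g) p -> p = IZR k * g.
Proof.
  intros [_ Hmin]. specialize (Hmin k).
  rewrite Rminus_diag, Rabs_R0 in Hmin.
  pose proof (Rabs_pos (IZR k * g - p)).
  assert (Rabs (IZR k * g - p) = 0) as Hzero%Rabs_eq_0 by lra. lra.
Qed.

Lemma nearest_multiple_le w v p q :
  nearest_multiple g w p -> nearest_multiple g v q -> w < v -> p <= q.
Proof.
  intros [[j Hj] Hp] [[l Hl] Hq] Hwv.
  apply Rnot_lt_le; intro Hqp.
  pose proof (Rsqr_le_abs_1 _ _ (Hp l)) as Ep.
  pose proof (Rsqr_le_abs_1 _ _ (Hq j)) as Eq.
  rewrite <- Hl in Ep; rewrite <- Hj in Eq. unfold Rsqr in Ep, Eq. nra.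
Qed.

Variable n : Z.
Hypothesis PI_multiple : IZR n * g = PI.

Lemma nearest_multiple_0_PI w p :
  0 <= w <= PI -> nearest_multiple g w p -> 0 <= p <= PI.
Proof.
  intros Hw [_ Hmin].
  pose proof (Hmin 0%Z) as H0. pose proof (Hmin n) as Hn.
  rewrite Rmult_0_l, Rminus_0_r, PI_multiple in *.
  unfold Rabs in H0, Hn.
  destruct (Rcase_abs w), (Rcase_abs (w - p)), (Rcase_abs (w - PI)); lra.
Qed.

Lemma nearest_multiple_fold w p :
  nearest_multiple g w p -> exists w' p',
    0 <= w' <= PI /\ nearest_multiple g w' p' /\ cos w' = cos w /\ cos p' = cos p.
Proof.
  intros Hwp. destruct (angle_reduce w) as [m Hm].
  assert (Hper : IZR m * (2 * PI) = IZR (m * (2 * n)) * g).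
  { rewrite !mult_IZR, <- PI_multiple. ring. }
  pose proof (nearest_multiple_shift (m * (2 * n)) _ _ Hwp) as Hred.
  rewrite <- Hper in Hred.
  destruct (Rle_or_lt 0 (w - IZR m * (2 * PI))).
  - exists (w - IZR m * (2 * PI)), (p - IZR m * (2 * PI)).
    rewrite !cos_sub_2PI_mult. split; [lra | auto].
  - exists (- (w - IZR m * (2 * PI))), (- (p - IZR m * (2 * PI))).
    rewrite !cos_neg, !cos_sub_2PI_mult.
    split; [lra | auto using nearest_multiple_opp].
Qed.

(* Only strict comparisons of cosines survive rounding: x and -x have the same
   cosine, but the tie-breaking rule may round them asymmetrically. *)
Lemma nearest_multiple_cos_le x y p q :
  nearest_multiple g x p -> nearest_multiple g y q -> cos x < cos y -> cos p <= cos q.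
Proof.
  intros Hx Hy.
  destruct (nearest_multiple_fold _ _ Hx) as (x' & p' & Hx' & Hp' & <- & <-).
  destruct (nearest_multiple_fold _ _ Hy) as (y' & q' & Hy' & Hq' & <- & <-).
  intros Hcos.
  pose proof (nearest_multiple_0_PI _ _ Hx' Hp').
  pose proof (nearest_multiple_0_PI _ _ Hy' Hq').
  apply cos_decreasing_0 in Hcos; try lra.
  pose proof (nearest_multiple_le _ _ _ _ Hq' Hp' Hcos).
  apply cos_decr_1; lra.
Qed.

Lemma nearest_multiple_cos_eq_m1 x p :
  nearest_multiple g x p -> cos x = -1 -> cos p = -1.
Proof.
  intros Hx.
  destruct (nearest_multiple_fold _ _ Hx) as (x' & p' & Hx' & Hp' & <- & <-).
  intros Hcos.
  pose proof PI_RGT_0.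
  assert (x' = PI) by (apply cos_inj; try lra; rewrite cos_PI; exact Hcos).
  subst x'. rewrite <- PI_multiple in Hp'.
  apply nearest_multiple_of_multiple in Hp'.
  rewrite Hp', PI_multiple. apply cos_PI.
Qed.

Lemma nearest_multiple_cos_sub_le k x y p q :
  nearest_multiple g x p -> nearest_multiple g y q ->
  cos (x - IZR k * g) = -1 \/ cos (x - IZR k * g) < cos (y - IZR k * g) ->
  cos (p - IZR k * g) <= cos (q - IZR k * g).
Proof.
  intros Hx%(nearest_multiple_shift k) Hy%(nearest_multiple_shift k) [Hcos | Hcos].
  - rewrite (nearest_multiple_cos_eq_m1 _ _ Hx Hcos). apply COS_bound.
  - exact (nearest_multiple_cos_le _ _ _ _ Hx Hy Hcos).
Qed.

End NearestMultiple.

Lemma carg_polar (z : C) : z <> 0%C ->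
  Re z = Cmod z * cos (carg z) /\ Im z = Cmod z * sin (carg z).
Proof.
  intros Hz%Cmod_gt_0. destruct z as [x y].
  unfold carg; cbn [Re Im fst snd] in *.
  set (r := Cmod (x, y)) in *.
  assert (Hr2 : r * r = x ^ 2 + y ^ 2)
    by (apply sqrt_sqrt; pose proof (pow2_ge_0 x); pose proof (pow2_ge_0 y); lra).
  assert (Hsin : 1 - (x / r)² = (y / r)²).
  { unfold Rsqr. field_simplify; try lra. f_equal. lra. }
  assert (Hcos : -1 <= x / r <= 1).
  { pose proof (Rle_0_sqr (y / r)). unfold Rsqr in *. split; nra. }
  assert (Habs : Rabs (y / r) = Rabs y / r)
    by (rewrite Rabs_div, (Rabs_pos_eq r); lra).
  destruct (Rle_dec 0 y).
  - rewrite cos_acos, sin_acos, Hsin, sqrt_Rsqr_abs, Habs, Rabs_pos_eq by lra.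
    split; field; lra.
  - rewrite cos_neg, sin_neg, cos_acos, sin_acos, Hsin, sqrt_Rsqr_abs, Habs,
      Rabs_left by lra.
    split; field; lra.
Qed.

Lemma cos_carg_sub (z : C) be : z <> 0%C ->
  cos (carg z - be) = (Re z * cos be + Im z * sin be) / Cmod z.
Proof.
  intros Hz. destruct (carg_polar z Hz) as [Ex Ey].
  pose proof (proj1 (Cmod_gt_0 z) Hz).
  rewrite Ex, Ey, cos_minus. field. lra.
Qed.

Lemma carg_scale l x y : 0 < l -> ((x, y) : C) <> 0%C -> carg (l * x, l * y) = carg (x, y).
Proof.
  intros Hl Hz%Cmod_gt_0.
  assert (Hmod : Cmod (l * x, l * y) = l * Cmod (x, y)).
  { unfold Cmod; cbn [fst snd].
    replace ((l * x) ^ 2 + (l * y) ^ 2) with (l ^ 2 * (x ^ 2 + y ^ 2)) by ring.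
    rewrite sqrt_mult_alt, sqrt_pow2; nra. }
  unfold carg; cbn [Re Im fst snd]. rewrite Hmod.
  replace (l * x / (l * Cmod (x, y))) with (x / Cmod (x, y)) by (field; lra).
  destruct (Rle_dec 0 (l * y)), (Rle_dec 0 y); nra.
Qed.

Lemma Cmod_rotate x y be :
  Cmod (x, y) = sqrt ((x * cos be + y * sin be) ^ 2 + (x * sin be - y * cos be) ^ 2).
Proof.
  unfold Cmod; cbn [fst snd]. f_equal.
  pose proof (sin2_cos2 be) as E. unfold Rsqr in E.
  transitivity ((x ^ 2 + y ^ 2) * (sin be * sin be + cos be * cos be)); [rewrite E |]; ring.
Qed.

Lemma div_sqrt_sq_add_lt d x y : d <> 0 -> x < y ->
  x / sqrt (x ^ 2 + d ^ 2) < y / sqrt (y ^ 2 + d ^ 2).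
Proof.
  intros Hd Hxy.
  set (f u := u / sqrt (u ^ 2 + d ^ 2)). change (f x < f y).
  assert (Hpos : forall u, 0 < sqrt (u ^ 2 + d ^ 2))
    by (intro u; apply sqrt_lt_R0; pose proof (pow2_ge_0 u); pose proof (pow2_gt_0 d Hd); lra).
  assert (Hnonneg : forall u, 0 <= u -> 0 <= f u)
    by (intros u Hu; apply Rdiv_le_0_compat; auto).
  assert (Hodd : forall u, f u = - f (- u))
    by (intro u; unfold f; replace ((- u) ^ 2) with (u ^ 2) by ring; field; apply Rgt_not_eq, Hpos).
  assert (Hmono : forall u v, 0 <= u < v -> f u < f v).
  { intros u v Huv. apply Rsqr_incrst_0; [| apply Hnonneg; lra ..].
    pose proof (pow2_gt_0 d Hd).
    assert (Huv2 : u * u < v * v) by nra.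
    unfold f. rewrite !Rsqr_div', !Rsqr_sqrt by nra.
    apply (Rmult_lt_reg_r ((u ^ 2 + d ^ 2) * (v ^ 2 + d ^ 2))); [nra |].
    unfold Rsqr. field_simplify; nra. }
  destruct (Rle_or_lt 0 x); [apply Hmono; lra |].
  destruct (Rle_or_lt y 0).
  - rewrite (Hodd x), (Hodd y).
    apply Ropp_lt_contravar, Hmono. lra.
  - assert (Hf0 : f 0 = 0) by (unfold f, Rdiv; ring).
    rewrite (Hodd x).
    pose proof (Hmono 0 (- x)). pose proof (Hmono 0 y). lra.
Qed.

Lemma carg_add_toward (a : C) t be : 0 < t -> a <> 0%C ->
  cos (carg a - be) = -1 \/
  carg (Cplus a (t * cos be, t * sin be)) = carg a \/
  cos (carg a - be) < cos (carg (Cplus a (t * cos be, t * sin be)) - be).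
Proof.
  intros Ht Ha. destruct a as [x y].
  change (Cplus (x, y) (t * cos be, t * sin be)) with (x + t * cos be, y + t * sin be).
  pose proof (sin2_cos2 be) as Hcs. unfold Rsqr in Hcs.
  (* coordinates of a along and across the direction be *)
  set (c := x * cos be + y * sin be). set (d := x * sin be - y * cos be).
  assert (Ec : (x + t * cos be) * cos be + (y + t * sin be) * sin be = c + t)
    by (transitivity (c + t * (sin be * sin be + cos be * cos be)); [unfold c | rewrite Hcs]; ring).
  assert (Ed : (x + t * cos be) * sin be - (y + t * sin be) * cos be = d)
    by (unfold d; ring).
  assert (Hx : x = c * cos be + d * sin be)
    by (transitivity (x * (sin be * sin be + cos be * cos be)); [rewrite Hcs | unfold c, d]; ring).
  assert (Hy : y = c * sin be - d * cos be)
    by (transitivity (y * (sin be * sin be + cos be * cos be)); [rewrite Hcs | unfold c, d]; ring).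
  destruct (Req_dec d 0) as [Hd | Hd].
  - assert (Hc : c <> 0)
      by (intro Hc; apply Ha; rewrite Hx, Hy, Hc, Hd; unfold RtoC; f_equal; ring).
    destruct (Rlt_or_le c 0) as [Hneg | Hpos].
    + left. rewrite cos_carg_sub by exact Ha. cbn [Re Im fst snd].
      rewrite (Cmod_rotate _ _ be). fold c d. rewrite Hd.
      replace (c ^ 2 + 0 ^ 2) with ((- c) ^ 2) by ring.
      rewrite sqrt_pow2 by lra. field. lra.
    + right; left.
      replace (x + t * cos be, y + t * sin be) with ((c + t) / c * x, (c + t) / c * y)
        by (rewrite Hx, Hy, Hd; f_equal; field; exact Hc).
      apply carg_scale; [apply Rdiv_lt_0_compat; lra | exact Ha].
  - right; right.
    rewrite !cos_carg_sub; cbn [Re Im fst snd].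
    + rewrite !(Cmod_rotate _ _ be), Ec, Ed. fold c d. apply div_sqrt_sq_add_lt; lra.
    + intros [= E1 E2]. apply Hd. rewrite <- Ed, E1, E2. ring.
    + exact Ha.
Qed.

Lemma Cmod_polar s al : 0 <= s -> Cmod (s * cos al, s * sin al) = s.
Proof.
  intros Hs. unfold Cmod; cbn [fst snd].
  replace ((s * cos al) ^ 2 + (s * sin al) ^ 2) with (s ^ 2 * ((sin al)² + (cos al)²))
    by (unfold Rsqr; ring).
  rewrite sin2_cos2, Rmult_1_r. apply sqrt_pow2, Hs.
Qed.

Lemma vangle_polar s t al be : 0 < s -> 0 < t ->
  vangle (s * cos al, s * sin al) (t * cos be, t * sin be) = acos (cos (al - be)).
Proof.
  intros Hs Ht. unfold vangle. rewrite !Cmod_polar by lra.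
  f_equal. cbn [Re Im fst snd]. rewrite cos_minus. field. lra.
Qed.

Lemma acos_decr x y : -1 <= x <= 1 -> -1 <= y <= 1 -> x <= y -> acos y <= acos x.
Proof.
  intros Hx Hy Hxy. apply cos_decr_0; try apply acos_bound.
  rewrite !cos_acos; assumption.
Qed.

Lemma pround_modulus_pos rA rth z : is_modulus_rounding rA ->
  pround rA rth z <> 0%C -> 0 < rA (Cmod z).
Proof.
  intros HrA Hz. destruct (HrA (Cmod z) (Cmod_ge_0 z)) as [| Hzero]; [assumption |].
  exfalso. apply Hz. unfold pround. rewrite <- Hzero. unfold RtoC. f_equal; ring.
Qed.

Lemma vangle_pround rA rth z t be : is_modulus_rounding rA -> pround rA rth z <> 0%C -> 0 < t ->
  vangle (pround rA rth z) (t * cos be, t * sin be) = acos (cos (rth (carg z) - be)).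
Proof.
  intros HrA Hz Ht. apply vangle_polar; [eapply pround_modulus_pos |]; eassumption.
Qed.

Theorem lemma22 (Rg : nat) (rA rth : R -> R) (a b : C) :
  (2 <= Rg)%nat ->
  is_modulus_rounding rA ->
  is_angle_rounding Rg rth ->
  b = pround rA rth b ->
  b <> 0%C ->
  pround rA rth a <> 0%C ->
  pround rA rth (a + b)%C <> 0%C ->
  vangle (pround rA rth a) b >= vangle (pround rA rth (a + b)%C) b.
Proof.
  intros HRg HrA Hrth Hb Hb0 Ha0 Hab0.
  assert (Ht : 0 < rA (Cmod b))
    by (apply (pround_modulus_pos _ rth _ HrA); rewrite <- Hb; exact Hb0).
  destruct (proj1 (Hrth (carg b))) as [k Hk].
  unfold pround in Hb. rewrite Hk in Hb.
  set (g := theta_g Rg) in *. set (t := rA (Cmod b)) in *. set (be := IZR k * g) in *.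
  assert (HPI : IZR (Z.of_nat Rg) * g = PI).
  { rewrite <- INR_IZR_INZ. unfold g, theta_g. field. apply not_0_INR. lia. }
  rewrite Hb at 1 3. rewrite !vangle_pround by assumption.
  apply Rle_ge, acos_decr; try apply COS_bound.
  destruct (Req_dec (Cmod a) 0) as [Ha | Ha].
  - apply Cmod_eq_0 in Ha. subst a.
    rewrite Cplus_0_l, Hk, Rminus_diag, cos_0. apply COS_bound.
  - assert (Ha' : a <> 0%C) by (intros ->; apply Ha, Cmod_0).
    rewrite Hb.
    destruct (carg_add_toward a t be Ht Ha') as [Hopp | [Hsame | Hcloser]].
    + eapply (nearest_multiple_cos_sub_le g _ HPI); [apply Hrth .. | left; exact Hopp].
    + rewrite Hsame. apply Rle_refl.
    + eapply (nearest_multiple_cos_sub_le g _ HPI); [apply Hrth .. | right; exact Hcloser].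
Qed.
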